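(* Let $h>0$, assume $g$ satisfies (H), fix $c>0$, and let $\phi,\psi$ be two wavefront profiles of (1) with velocity $c$. Suppose that, as $t\to-\infty$, $\phi(t)=a(-t)^m e^{\lambda t}(1+o(1))$ and $\psi(t)=b(-t)^n e^{\mu t}(1+o(1))$ with $a,b>0$, $\lambda,\mu>0$ and $m,n\in\{0,1\}$. Then $\lambda=\mu$ and $m=n$.
   Context: Hypothesis (H): $g:\mathbb{R}_+\to\mathbb{R}_+$ is continuous and strictly increasing; $g(x)=x$ has exactly two nonnegative solutions $0$ and $\kappa>0$; $g$ is differentiable at $0,\kappa$ with $g'(0)>1$, $g'(\kappa)<1$; $g$ is $C^1$ near $\kappa$; and $|g(u)/u-g'(0)|\le Cu^\theta$ for $u\in(0,\delta]$ for some $C>0,\theta\in(0,1],\delta>0$. A wavefront profile with velocity $c$ is a $C^2$, positive, bounded, monotone $\phi:\mathbb{R}\to\mathbb{R}$ with $\phi(-\infty)=0$, $\phi(+\infty)=\kappa$ and $\phi''(s)-c\phi'(s)-\phi(s)+g(\phi(s-ch))=0$, $s\in\mathbb{R}$. *)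

From Stdlib Require Import Reals.
Open Scope R_scope.

(* Hypothesis (H) on g : R_+ -> R_+, with positive equilibrium kappa.
   g is given as a total function R -> R; only its values on [0,+oo) matter. *)
Definition hypH (g : R -> R) (kappa : R) : Prop :=
  0 < kappa /\
  (forall x, 0 <= x -> 0 <= g x) /\
  (forall x, 0 <= x -> forall eps, 0 < eps -> exists del, 0 < del /\
      forall y, 0 <= y -> Rabs (y - x) < del -> Rabs (g y - g x) < eps) /\
  (forall x y, 0 <= x -> x < y -> g x < g y) /\
  (forall x, 0 <= x -> (g x = x <-> (x = 0 \/ x = kappa))) /\
  exists d0 dk : R,
    (forall eps, 0 < eps -> exists del, 0 < del /\
       forall u, 0 < u -> u < del -> Rabs ((g u - g 0) / u - d0) < eps) /\
    1 < d0 /\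
    derivable_pt_lim g kappa dk /\ dk < 1 /\
    (exists r (g1 : R -> R), 0 < r /\
       (forall x, kappa - r < x < kappa + r -> derivable_pt_lim g x (g1 x)) /\
       (forall x, kappa - r < x < kappa + r -> continuity_pt g1 x)) /\
    (exists C theta delta, 0 < C /\ 0 < theta <= 1 /\ 0 < delta /\
       forall u, 0 < u <= delta -> Rabs (g u / u - d0) <= C * Rpower u theta).

Definition wavefront (g : R -> R) (kappa h c : R) (phi : R -> R) : Prop :=
  exists phi1 phi2 : R -> R,
    (forall s, derivable_pt_lim phi s (phi1 s)) /\
    (forall s, derivable_pt_lim phi1 s (phi2 s)) /\
    continuity phi2 /\
    (forall s, 0 < phi s) /\
    (exists B, forall s, Rabs (phi s) <= B) /\
    ((forall x y, x <= y -> phi x <= phi y) \/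
     (forall x y, x <= y -> phi y <= phi x)) /\
    (forall eps, 0 < eps -> exists M, forall s, s <= M -> Rabs (phi s) < eps) /\
    (forall eps, 0 < eps -> exists M, forall s, M <= s -> Rabs (phi s - kappa) < eps) /\
    (forall s, phi2 s - c * phi1 s - phi s + g (phi (s - c * h)) = 0).

Definition asympt_minus_infty (f : R -> R) (a lam : R) (m : nat) : Prop :=
  forall eps, 0 < eps -> exists M, forall t, t <= M ->
    Rabs (f t / (a * (- t) ^ m * exp (lam * t)) - 1) < eps.

From Stdlib Require Import Reals Lra Classical.
Open Scope R_scope.

(* The heart of the proof is a sliding argument (Lemma [no_faster_decay]):
   no profile [psi] can decay faster at -oo than every translate of another
   profile [phi].  Otherwise
   - some translate [phi (. + tau)] dominates [psi]: far left by assumption,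
     near [kappa] by a comparison principle using that [g] contracts on a
     left neighbourhood of [kappa] ([g'(kappa) < 1]);
   - the least dominating shift [tau*] exists and is dominating;
   - the domination at [tau*] is strict: at a contact point the gap has a
     minimum, the equation then forces a contact one delay [c h] earlier,
     and iterating contradicts the faster decay;
   - a strict domination can be shifted slightly to the left, contradicting
     the minimality of [tau*].
   Finally, if the expansions [a (-t)^m e^(lam t)] and [b (-t)^n e^(mu t)]
   differ, the one with smaller rate (or, at equal rate, with the factor
   [-t]) decays slower than every translate of the other, which the sliding
   argument excludes; hence [lam = mu] and [m = n]. *)

Lemma decreasing_right_of_neg_deriv f x l :
  derivable_pt_lim f x l -> l < 0 ->
  exists d, 0 < d /\ forall y, x < y < x + d -> f y < f x.
Proof.
  intros Hf Hl. destruct (Hf (- l) ltac:(lra)) as [del Hdel].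
  exists (pos del). split; [apply cond_pos|]. intros y Hy.
  assert (Hq := Hdel (y - x) ltac:(lra) ltac:(rewrite Rabs_right; lra)).
  replace (x + (y - x)) with y in Hq by ring.
  apply Rabs_def2 in Hq. destruct Hq as [Hq _].
  assert (Hslope : (f y - f x) / (y - x) * (y - x) = f y - f x) by (field; lra).
  set (q := (f y - f x) / (y - x)) in *.
  assert (q * (y - x) < 0) by (apply Rmult_neg_pos; lra). lra.
Qed.

Lemma local_min_conditions f f1 f2 x r :
  0 < r -> (forall y, x - r < y < x + r -> f x <= f y) ->
  (forall y, derivable_pt_lim f y (f1 y)) -> derivable_pt_lim f1 x f2 ->
  f1 x = 0 /\ 0 <= f2.
Proof.
  intros Hr Hmin Hf Hf1.
  assert (Hcrit : f1 x = 0).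
  { apply (deriv_minimum f (x - r) (x + r) x (exist _ (f1 x) (Hf x))); try lra.
    intros y Hy1 Hy2. apply Hmin; lra. }
  split; [exact Hcrit|].
  destruct (Rle_or_lt 0 f2) as [|Hneg]; [assumption|exfalso].
  (* otherwise [f'] is negative just right of [x], so [f] decreases there *)
  destruct (decreasing_right_of_neg_deriv f1 x f2 Hf1 Hneg) as [d [Hd Hdec]].
  set (y := x + Rmin d r / 2).
  assert (Hy : x < y < x + d /\ y < x + r) by (unfold y, Rmin; destruct Rle_dec; lra).
  destruct (MVT_cor2 f f1 x y ltac:(lra) (fun z _ => Hf z)) as [z [Hz Hzxy]].
  assert (Hfz : f1 z < 0) by (rewrite <- Hcrit; apply Hdec; lra).
  assert (f1 z * (y - x) < 0) by (apply Rmult_neg_pos; lra).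
  specialize (Hmin y ltac:(lra)). lra.
Qed.

Lemma never_by_backward_steps (P : R -> Prop) d :
  0 < d -> (forall s, P s -> P (s - d)) ->
  (exists S, forall s, s <= S -> ~ P s) -> forall s, ~ P s.
Proof.
  intros Hd Hstep [S HS] s Ps.
  assert (Hiter : forall k, P (s - INR k * d)).
  { induction k as [|k IH].
    - simpl. replace (s - 0 * d) with s by ring. exact Ps.
    - rewrite S_INR. replace (s - (INR k + 1) * d) with (s - INR k * d - d) by ring.
      apply Hstep, IH. }
  destruct (INR_archimed d (s - S) Hd) as [k Hk].
  apply (HS (s - INR k * d)); [lra | apply Hiter].
Qed.

Lemma le_of_right_values f x y :
  continuity_pt f x -> (forall e, 0 < e -> y <= f (x + e)) -> y <= f x.
Proof.
  intros Hcont Hright. destruct (Rle_or_lt y (f x)) as [|Hlt]; [assumption|exfalso].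
  destruct (Hcont (y - f x) ltac:(lra)) as [del [Hdel Hclose]].
  assert (Hdom : D_x no_cond x (x + del / 2)) by (split; [constructor | lra]).
  assert (Hdist : R_dist (x + del / 2) x < del).
  { unfold R_dist. rewrite Rabs_right; lra. }
  specialize (Hclose (x + del / 2) (conj Hdom Hdist)). simpl in Hclose.
  unfold R_dist in Hclose. apply Rabs_def2 in Hclose.
  specialize (Hright (del / 2) ltac:(lra)). lra.
Qed.

Lemma lub_approximation (E : R -> Prop) m e :
  is_lub E m -> 0 < e -> exists x, E x /\ m - e < x.
Proof.
  intros [Hub Hleast] He. apply NNPP. intros Hno.
  assert (m <= m - e); [|lra].
  apply Hleast. intros x Ex. destruct (Rle_or_lt x (m - e)) as [|Hx]; [assumption|].
  exfalso. apply Hno. exists x. split; assumption.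
Qed.

Lemma translate_derivative f s t l :
  derivable_pt_lim f (s + t) l -> derivable_pt_lim (fun x => f (x + t)) s l.
Proof.
  intros Hf e He. destruct (Hf e He) as [d Hd]. exists d. intros k Hk0 Hk.
  replace (s + k + t) with (s + t + k) by ring. apply Hd; assumption.
Qed.

Lemma fixed_point_kappa g kappa : hypH g kappa -> g kappa = kappa.
Proof.
  intros (Hk & _ & _ & _ & Hfix & _). apply (Hfix kappa ltac:(lra)). right; reflexivity.
Qed.

(* Since [g'(kappa) < 1] and [g] is [C^1] near [kappa], [g] is a strict
   contraction on a left neighbourhood of [kappa]. *)
Lemma contraction_below_kappa g kappa : hypH g kappa ->
  exists r q, 0 < r /\ 0 <= q < 1 /\
  forall A B, kappa - r < A -> A < B -> B <= kappa -> g B - g A <= q * (B - A).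
Proof.
  intros (Hk & _ & _ & _ & _ & d0 & dk & _ & _ & Hdk & Hdk1 &
          [r [g1 [Hr [Hg1 Hcont]]]] & _).
  assert (Hg1k : g1 kappa = dk).
  { apply (uniqueness_limite g kappa); [apply Hg1; lra | exact Hdk]. }
  destruct (Hcont kappa ltac:(lra) ((1 - dk) / 2) ltac:(lra)) as [alp [Halp Hclose]].
  set (q := Rmax 0 ((1 + dk) / 2)).
  assert (Hq : (1 + dk) / 2 <= q) by apply Rmax_r.
  exists (Rmin r alp), q. split; [apply Rmin_pos; lra|].
  split; [split; [apply Rmax_l | apply Rmax_lub_lt; lra]|].
  intros A B HA HAB HB.
  assert (Hr1 := Rmin_l r alp). assert (Hr2 := Rmin_r r alp).
  destruct (MVT_cor2 g g1 A B HAB) as [xi [Hmvt Hxi]].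
  { intros y Hy. apply Hg1. lra. }
  assert (Hslope : g1 xi <= q).
  { destruct (Req_dec xi kappa) as [->|Hne]; [lra|].
    assert (Hdist : R_dist xi kappa < alp) by (unfold R_dist; rewrite Rabs_left; lra).
    specialize (Hclose xi (conj (conj I (not_eq_sym Hne)) Hdist)).
    simpl in Hclose. unfold R_dist in Hclose. apply Rabs_def2 in Hclose. lra. }
  rewrite Hmvt. apply Rmult_le_compat_r; lra.
Qed.

Section ProfileShape.

Variables (g : R -> R) (kappa h c : R) (phi : R -> R).
Hypothesis Wphi : wavefront g kappa h c phi.

(* A profile must increase: a nonincreasing positive profile cannot vanish at [-oo]. *)
Lemma profile_nondecreasing : forall x y, x <= y -> phi x <= phi y.
Proof.
  destruct Wphi as (_ & _ & _ & _ & _ & Hpos & _ & [Hmon|Hmon] & Hleft & _);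
    [exact Hmon|exfalso].
  destruct (Hleft (phi 0) (Hpos 0)) as [M HM].
  specialize (HM (Rmin M 0) (Rmin_l _ _)). specialize (Hmon (Rmin M 0) 0 (Rmin_r _ _)).
  specialize (Hpos (Rmin M 0)). rewrite Rabs_right in HM; lra.
Qed.

(* Being nondecreasing with limit [kappa], a profile stays below [kappa]. *)
Lemma profile_le_kappa : forall x, phi x <= kappa.
Proof.
  intros x. destruct Wphi as (_ & _ & _ & _ & _ & _ & _ & _ & _ & Hright & _).
  destruct (Rle_or_lt (phi x) kappa) as [|Hlt]; [assumption|exfalso].
  destruct (Hright (phi x - kappa) ltac:(lra)) as [M HM].
  specialize (HM (Rmax M x) (Rmax_l _ _)).
  assert (Hmon := profile_nondecreasing x (Rmax M x) (Rmax_r _ _)).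
  rewrite Rabs_right in HM; lra.
Qed.

Lemma profile_near_kappa r : 0 < r -> exists S, forall x, S <= x -> kappa - r < phi x.
Proof.
  intros Hr. destruct Wphi as (_ & _ & _ & _ & _ & _ & _ & _ & _ & Hright & _).
  destruct (Hright r Hr) as [M HM]. exists M. intros x Hx.
  specialize (HM x Hx). apply Rabs_def2 in HM. lra.
Qed.

Lemma profile_continuous : forall x, continuity_pt phi x.
Proof.
  destruct Wphi as (phi1 & _ & Hd1 & _). intros x.
  apply derivable_continuous_pt. exists (phi1 x). apply Hd1.
Qed.

End ProfileShape.

Section BelowKappa.

Variables (g : R -> R) (kappa h c : R) (phi : R -> R).
Hypotheses (Hh : 0 < h) (Hc : 0 < c) (HH : hypH g kappa).
Hypothesis Wphi : wavefront g kappa h c phi.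

(* A profile never reaches [kappa]: at a point where [phi = kappa] the profile
   has a maximum, so the equation forces [g (phi (s - c h)) >= kappa], i.e.
   [phi = kappa] one delay earlier; iterating contradicts [phi(-oo) = 0]. *)
Lemma profile_lt_kappa : forall x, phi x < kappa.
Proof.
  assert (Hle := profile_le_kappa g kappa h c phi Wphi).
  assert (Hgk := fixed_point_kappa g kappa HH).
  assert (Hnever : forall x, phi x <> kappa).
  { apply (never_by_backward_steps (fun x => phi x = kappa) (c * h));
      [apply Rmult_lt_0_compat; assumption | |].
    - intros x Hx.
      destruct Wphi as (phi1 & phi2 & Hd1 & Hd2 & _ & Hpos & _ & _ & _ & _ & Heq).
      destruct HH as (_ & _ & _ & Hinc & _).
      destruct (local_min_conditions (fun y => - phi y) (fun y => - phi1 y) (- phi2 x) x 1)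
        as [Hcrit Hconc]; [lra | intros y _; specialize (Hle y); lra
        | intros y; apply derivable_pt_lim_opp, Hd1 | apply derivable_pt_lim_opp, Hd2 |].
      cbv beta in Hcrit. assert (Hflat : phi1 x = 0) by lra.
      specialize (Heq x). rewrite Hflat in Heq. specialize (Hle (x - c * h)).
      destruct Hle as [Hlt|]; [exfalso|assumption].
      specialize (Hinc _ _ (Rlt_le _ _ (Hpos (x - c * h))) Hlt). lra.
    - destruct Wphi as (_ & _ & _ & _ & _ & _ & _ & _ & Hleft & _).
      destruct HH as (Hk & _).
      destruct (Hleft kappa Hk) as [M HM]. exists M. intros s Hs Heq.
      specialize (HM s Hs). rewrite Heq, Rabs_right in HM; lra. }
  intros x. destruct (Hle x) as [|Heq]; [assumption|]. exfalso. exact (Hnever x Heq).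
Qed.

End BelowKappa.

Definition decays_faster (psi phi : R -> R) : Prop :=
  forall sig, exists S, forall s, s <= S -> psi s < phi (s + sig).

Section Sliding.

Variables (g : R -> R) (kappa h c : R) (phi psi : R -> R).
Hypotheses (Hh : 0 < h) (Hc : 0 < c) (HH : hypH g kappa).
Hypotheses (Wphi : wavefront g kappa h c phi) (Wpsi : wavefront g kappa h c psi).

Let Hdelay : 0 < c * h := Rmult_lt_0_compat c h Hc Hh.

Definition dominates (tau : R) : Prop := forall s, psi s <= phi (s + tau).

Definition gap (tau y : R) : R := phi (y + tau) - psi y.

Lemma dominates_monotone tau tau' : tau <= tau' -> dominates tau -> dominates tau'.
Proof.
  intros Htt Hdom s. specialize (Hdom s).
  assert (Hmon := profile_nondecreasing g kappa h c phi Wphi (s + tau) (s + tau')).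
  lra.
Qed.

Lemma gap_continuous tau : forall x, continuity_pt (gap tau) x.
Proof.
  intros x. destruct Wphi as (phi1 & _ & Hd1 & _). destruct Wpsi as (psi1 & _ & Ed1 & _).
  apply derivable_continuous_pt. exists (phi1 (x + tau) - psi1 x).
  apply (derivable_pt_lim_minus (fun y => phi (y + tau)) psi);
    [apply translate_derivative, Hd1 | apply Ed1].
Qed.

(* Comparison principle: at a local minimum [x] of the gap, [gap'' >= 0] and
   [gap' = 0], so the equation bounds the gap below by the increment of [g]
   between the delayed values. *)
Lemma touching_inequality tau x r : 0 < r ->
  (forall y, x - r < y < x + r -> gap tau x <= gap tau y) ->
  gap tau x >= g (phi (x - c * h + tau)) - g (psi (x - c * h)).
Proof.
  intros Hr Hmin.
  destruct Wphi as (phi1 & phi2 & Hd1 & Hd2 & _ & _ & _ & _ & _ & _ & Heq1).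
  destruct Wpsi as (psi1 & psi2 & Ed1 & Ed2 & _ & _ & _ & _ & _ & _ & Heq2).
  set (gap1 := fun y => phi1 (y + tau) - psi1 y).
  assert (Dgap : forall y, derivable_pt_lim (gap tau) y (gap1 y)).
  { intros y. apply (derivable_pt_lim_minus (fun y => phi (y + tau)) psi);
      [apply translate_derivative, Hd1 | apply Ed1]. }
  assert (Dgap1 : derivable_pt_lim gap1 x (phi2 (x + tau) - psi2 x)).
  { apply (derivable_pt_lim_minus (fun y => phi1 (y + tau)) psi1);
      [apply translate_derivative, Hd2 | apply Ed2]. }
  destruct (local_min_conditions (gap tau) gap1 _ x r Hr Hmin Dgap Dgap1) as [Hcrit Hconv].
  unfold gap1 in Hcrit. unfold gap.
  specialize (Heq1 (x + tau)). specialize (Heq2 x).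
  replace (x + tau - c * h) with (x - c * h + tau) in Heq1 by ring.
  assert (Hflat : phi1 (x + tau) = psi1 x) by lra. rewrite Hflat in Heq1. lra.
Qed.

Lemma gap_eventually_above tau e : 0 < e ->
  exists R, forall y, R <= y -> - e < gap tau y.
Proof.
  intros He.
  destruct (profile_near_kappa g kappa h c phi Wphi e He) as [M1 HM1].
  assert (Hle := profile_le_kappa g kappa h c psi Wpsi).
  exists (M1 - tau). intros y Hy. specialize (HM1 (y + tau) ltac:(lra)).
  specialize (Hle y). unfold gap. lra.
Qed.

Lemma negative_gap_minimum tau S s0 :
  (forall s, S - c * h <= s <= S -> 0 <= gap tau s) ->
  S - c * h <= s0 -> gap tau s0 < 0 ->
  exists s1, S < s1 /\ gap tau s1 < 0 /\
    forall y, S - c * h <= y -> gap tau s1 <= gap tau y.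
Proof.
  intros Hnonneg Hs0 Hneg.
  destruct (gap_eventually_above tau (- gap tau s0) ltac:(lra)) as [R HR].
  assert (HR1 := Rmax_l R s0). assert (HR2 := Rmax_r R s0). set (R' := Rmax R s0) in *.
  destruct (continuity_ab_min (gap tau) (S - c * h) R' ltac:(lra)) as [s1 [Hmin Hs1]].
  { intros y _. apply gap_continuous. }
  assert (Hle : gap tau s1 <= gap tau s0) by (apply Hmin; lra).
  assert (Hglob : forall y, S - c * h <= y -> gap tau s1 <= gap tau y).
  { intros y Hy. destruct (Rle_or_lt y R') as [Hy'|Hy'];
      [apply Hmin; lra | specialize (HR y ltac:(lra)); lra]. }
  exists s1. split; [|split; [lra | exact Hglob]].
  destruct (Rlt_or_le S s1) as [|Hs1S]; [assumption|].
  specialize (Hnonneg s1 ltac:(lra)). lra.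
Qed.

(* Near [kappa], where [g] contracts, domination on one delay interval
   [[S - c h, S]] propagates to the whole half-line [[S - c h, +oo)]: at a
   negative minimum of the gap, the touching inequality and the contraction
   would make the minimum at most [q] times itself. *)
Lemma comparison_near_kappa tau S r q : 0 <= q < 1 ->
  (forall A B, kappa - r < A -> A < B -> B <= kappa -> g B - g A <= q * (B - A)) ->
  (forall s, S - c * h <= s -> kappa - r < phi (s + tau) /\ kappa - r < psi s) ->
  (forall s, S - c * h <= s <= S -> psi s <= phi (s + tau)) ->
  forall s, S - c * h <= s -> psi s <= phi (s + tau).
Proof.
  intros Hq Hcontr Hnear Hdom s0 Hs0.
  destruct (Rle_or_lt 0 (gap tau s0)) as [|Hneg]; [unfold gap in *; lra|exfalso].
  destruct (negative_gap_minimum tau S s0) as [s1 [Hs1 [Hmin Hglob]]];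
    [intros s Hs; specialize (Hdom s Hs); unfold gap; lra | assumption | assumption |].
  assert (Htouch := touching_inequality tau s1 (s1 - S) ltac:(lra)
                     ltac:(intros y Hy; apply Hglob; lra)).
  specialize (Hglob (s1 - c * h) ltac:(lra)).
  destruct (Hnear (s1 - c * h) ltac:(lra)) as [HA HB].
  assert (HBk := profile_le_kappa g kappa h c psi Wpsi (s1 - c * h)).
  assert (Hpsi_pos : 0 < psi (s1 - c * h)) by (destruct Wpsi as (_&_&_&_&_&P&_); apply P).
  destruct HH as (_ & _ & _ & Hinc & _).
  unfold gap in *.
  set (A := phi (s1 - c * h + tau)) in *. set (B := psi (s1 - c * h)) in *.
  destruct (Rtotal_order A B) as [HAB|[HAB|HAB]].
  - specialize (Hcontr A B HA HAB HBk). nra.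
  - rewrite HAB in Htouch. lra.
  - specialize (Hinc B A ltac:(lra) HAB). lra.
Qed.

Lemma domination_propagates_right : exists R0, forall tau S,
  R0 <= S - c * h -> R0 <= S - c * h + tau ->
  (forall s, S - c * h <= s <= S -> psi s <= phi (s + tau)) ->
  forall s, S - c * h <= s -> psi s <= phi (s + tau).
Proof.
  destruct (contraction_below_kappa g kappa HH) as [r [q [Hr [Hq Hcontr]]]].
  destruct (profile_near_kappa g kappa h c phi Wphi r Hr) as [Sphi HSphi].
  destruct (profile_near_kappa g kappa h c psi Wpsi r Hr) as [Spsi HSpsi].
  exists (Rmax Sphi Spsi). intros tau S H1 H2.
  assert (Hm1 := Rmax_l Sphi Spsi). assert (Hm2 := Rmax_r Sphi Spsi).
  apply (comparison_near_kappa tau S r q Hq Hcontr).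
  intros s Hs. split; [apply HSphi | apply HSpsi]; lra.
Qed.

(* Translates far enough to the left do not dominate, as [phi (-oo) = 0 < psi 0]. *)
Lemma some_shift_fails : exists tau, ~ dominates tau.
Proof.
  assert (Hpsi0 : 0 < psi 0) by (destruct Wpsi as (_&_&_&_&_&P&_); apply P).
  destruct Wphi as (_ & _ & _ & _ & _ & _ & _ & _ & Hleft & _).
  destruct (Hleft (psi 0) Hpsi0) as [M HM]. exists M. intros Hdom.
  specialize (Hdom 0). specialize (HM (0 + M) ltac:(lra)).
  apply Rabs_def2 in HM. lra.
Qed.

Hypothesis Hfaster : decays_faster psi phi.

(* A dominating translate cannot touch [psi]: a contact point is a minimum of
   the gap, and by the touching inequality and strict monotonicity of [g] the
   contact repeats one delay earlier, contradicting [decays_faster]. *)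
Lemma strict_domination tau : dominates tau -> forall s, psi s < phi (s + tau).
Proof.
  intros Hdom.
  assert (Hnever : forall s, gap tau s <> 0).
  { apply (never_by_backward_steps (fun s => gap tau s = 0) (c * h) Hdelay).
    - intros s Hcontact.
      assert (Htouch := touching_inequality tau s 1 ltac:(lra)
        ltac:(intros y _; rewrite Hcontact; specialize (Hdom y); unfold gap; lra)).
      assert (Hpos : 0 < psi (s - c * h)) by (destruct Wpsi as (_&_&_&_&_&P&_); apply P).
      destruct HH as (_ & _ & _ & Hinc & _).
      specialize (Hdom (s - c * h)). destruct Hdom as [Hlt|Heq]; [exfalso | unfold gap; lra].
      specialize (Hinc _ _ (Rlt_le _ _ Hpos) Hlt). lra.
    - destruct (Hfaster tau) as [S HS]. exists S. intros s Hs Hcontact.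
      specialize (HS s Hs). unfold gap in Hcontact. lra. }
  intros s. destruct (Hdom s) as [|Heq]; [assumption|].
  exfalso. apply (Hnever s). unfold gap. lra.
Qed.

(* Some translate of [phi] dominates [psi]: far left by [decays_faster],
   on a bounded interval since [psi < kappa], and on the right by comparison. *)
Lemma dominating_shift_exists : exists tau, dominates tau.
Proof.
  destruct (domination_propagates_right) as [R0 HR0].
  destruct (Hfaster 0) as [S1 HS1].
  assert (H21 := Rmax_l (S1 + c * h) (R0 + c * h)).
  assert (H22 := Rmax_r (S1 + c * h) (R0 + c * h)).
  set (S2 := Rmax (S1 + c * h) (R0 + c * h)) in *.
  assert (Hbelow := profile_lt_kappa g kappa h c psi Hh Hc HH Wpsi S2).
  destruct (profile_near_kappa g kappa h c phi Wphi (kappa - psi S2) ltac:(lra))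
    as [M HM].
  set (tau := Rmax 0 (Rmax (M - S1) (R0 - S2 + c * h))).
  assert (T0 : 0 <= tau) by apply Rmax_l.
  assert (T1 : M - S1 <= tau) by (eapply Rle_trans; [|apply Rmax_r]; apply Rmax_l).
  assert (T2 : R0 - S2 + c * h <= tau) by (eapply Rle_trans; [|apply Rmax_r]; apply Rmax_r).
  exists tau.
  assert (Hmon_phi := profile_nondecreasing g kappa h c phi Wphi).
  assert (Hmon_psi := profile_nondecreasing g kappa h c psi Wpsi).
  assert (Hleft : forall s, s <= S2 -> psi s <= phi (s + tau)).
  { intros s Hs. destruct (Rle_or_lt s S1) as [Hs1|Hs1].
    - specialize (HS1 s Hs1). specialize (Hmon_phi (s + 0) (s + tau) ltac:(lra)). lra.
    - specialize (Hmon_psi s S2 Hs). specialize (HM (S1 + tau) ltac:(lra)).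
      specialize (Hmon_phi (S1 + tau) (s + tau) ltac:(lra)). lra. }
  intros s. destruct (Rle_or_lt s S2) as [Hs|Hs]; [apply Hleft; exact Hs|].
  apply (HR0 tau S2); [lra | lra | intros y Hy; apply Hleft; lra | lra].
Qed.

(* On a compact interval a strict domination survives a small shift to the
   left, [phi'] being bounded there. *)
Lemma shift_on_compact tau S1 S2 : S1 <= S2 ->
  (forall s, S1 <= s <= S2 -> psi s < phi (s + tau)) ->
  exists eps, 0 < eps <= 1 /\ forall s, S1 <= s <= S2 -> psi s <= phi (s + (tau - eps)).
Proof.
  intros HS Hstrict.
  destruct (continuity_ab_min (gap tau) S1 S2 HS) as [smin [Hmin Hsmin]].
  { intros y _. apply gap_continuous. }
  set (del := gap tau smin).
  assert (Hdel : 0 < del) by (unfold del, gap; specialize (Hstrict smin Hsmin); lra).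
  destruct Wphi as (phi1 & phi2 & Hd1 & Hd2 & _).
  destruct (continuity_ab_maj phi1 (S1 + tau - 1) (S2 + tau) ltac:(lra)) as [bx [Hmax _]].
  { intros y _. apply derivable_continuous_pt. exists (phi2 y). apply Hd2. }
  (* [Bd] bounds the slope of [phi] on [[S1 + tau - 1, S2 + tau]] *)
  set (Bd := Rabs (phi1 bx) + 1).
  assert (HBd : 0 < Bd) by (unfold Bd; pose proof (Rabs_pos (phi1 bx)); lra).
  assert (Hbx : phi1 bx <= Rabs (phi1 bx)) by apply Rle_abs.
  set (eps := Rmin 1 (del / Bd)).
  assert (He1 : eps <= 1) by apply Rmin_l.
  assert (He0 : 0 < eps) by (apply Rmin_pos; [lra | apply Rdiv_lt_0_compat; lra]).
  assert (HeB : Bd * eps <= del).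
  { apply Rmult_le_reg_r with (/ Bd); [apply Rinv_0_lt_compat; lra|].
    replace (Bd * eps * / Bd) with eps by (field; lra). apply Rmin_r. }
  exists eps. split; [lra|]. intros s Hs.
  destruct (MVT_cor2 phi phi1 (s + tau - eps) (s + tau) ltac:(lra) (fun z _ => Hd1 z))
    as [xi [Hmvt Hxi]].
  assert (phi1 xi <= phi1 bx) by (apply Hmax; lra).
  assert (del <= gap tau s) by (apply Hmin; lra).
  unfold gap, Bd in *. replace (s + (tau - eps)) with (s + tau - eps) by ring.
  replace (s + tau - (s + tau - eps)) with eps in Hmvt by ring. nra.
Qed.

Lemma domination_improves tau : dominates tau -> exists eps, 0 < eps /\ dominates (tau - eps).
Proof.
  intros Hdom.
  assert (Hstrict := strict_domination tau Hdom).
  destruct (domination_propagates_right) as [R0 HR0].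
  destruct (Hfaster (tau - 1)) as [S1 HS1].
  assert (H21 := Rmax_l (S1 + c * h) (R0 + c * h + Rabs tau + 1)).
  assert (H22 := Rmax_r (S1 + c * h) (R0 + c * h + Rabs tau + 1)).
  set (S2 := Rmax (S1 + c * h) (R0 + c * h + Rabs tau + 1)) in *.
  assert (Habs : - tau <= Rabs tau) by (rewrite <- Rabs_Ropp; apply Rle_abs).
  assert (Habs0 := Rabs_pos tau).
  destruct (shift_on_compact tau S1 S2 ltac:(lra) ltac:(intros s _; apply Hstrict))
    as [eps [[He0 He1] Hmid]].
  exists eps. split; [exact He0|]. intros s.
  destruct (Rle_or_lt s S1) as [Hs|Hs].
  - specialize (HS1 s Hs).
    assert (Hmon := profile_nondecreasing g kappa h c phi Wphi
                      (s + (tau - 1)) (s + (tau - eps)) ltac:(lra)). lra.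
  - destruct (Rle_or_lt s S2) as [Hs2|Hs2]; [apply Hmid; lra|].
    apply (HR0 (tau - eps) S2); [lra | lra | intros y Hy; apply Hmid; lra | lra].
Qed.

(* Sliding method: the least dominating shift would be dominating and
   improvable, which is absurd.  Hence no profile decays faster than all
   translates of another one. *)
Lemma no_faster_decay : False.
Proof.
  destruct some_shift_fails as [tb Htb].
  destruct dominating_shift_exists as [t0 Ht0].
  set (E := fun x => dominates (- x)).
  assert (Hbound : forall x, E x -> x <= - tb).
  { intros x Ex. destruct (Rle_or_lt x (- tb)) as [|Hx]; [assumption|exfalso].
    apply Htb, (dominates_monotone (- x)); [lra | exact Ex]. }
  destruct (completeness E) as [m Hlub].
  { exists (- tb). exact Hbound. }
  { exists (- t0). unfold E. rewrite Ropp_involutive. exact Ht0. }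
  (* the least dominating shift [- m] is dominating, by continuity of [phi] *)
  assert (Hstar : dominates (- m)).
  { intros s. apply le_of_right_values;
      [apply (profile_continuous g kappa h c phi Wphi)|].
    intros e He. destruct (lub_approximation E m e Hlub He) as [x [Ex Hx]].
    replace (s + - m + e) with (s + (- m + e)) by ring.
    apply (dominates_monotone (- x)); [lra | exact Ex]. }
  destruct (domination_improves (- m) Hstar) as [eps [He Himp]].
  assert (m + eps <= m); [|lra].
  apply Hlub. unfold E. replace (- (m + eps)) with (- m - eps) by ring. exact Himp.
Qed.

End Sliding.

Lemma asymptotic_bounds f a lam m : asympt_minus_infty f a lam m -> 0 < a ->
  exists M, forall t, t <= M ->
    / 2 * (a * (- t) ^ m * exp (lam * t)) < f t < 3 / 2 * (a * (- t) ^ m * exp (lam * t)).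
Proof.
  intros Hasym Ha. destruct (Hasym (/ 2) ltac:(lra)) as [M HM].
  exists (Rmin M (-1)). intros t Ht.
  assert (HtM := Rle_trans _ _ _ Ht (Rmin_l M (-1))).
  assert (Ht1 := Rle_trans _ _ _ Ht (Rmin_r M (-1))).
  specialize (HM t HtM). apply Rabs_def2 in HM.
  set (D := a * (- t) ^ m * exp (lam * t)) in *.
  assert (HD : 0 < D).
  { unfold D. apply Rmult_lt_0_compat; [apply Rmult_lt_0_compat; [assumption|] | apply exp_pos].
    apply pow_lt. lra. }
  assert (Hratio : f t / D * D = f t) by (field; lra).
  set (r := f t / D) in *. nra.
Qed.

Lemma exp_ge_half_square x : 0 <= x -> (x / 2) ^ 2 <= exp x.
Proof.
  intros Hx. replace x with (x / 2 + x / 2) at 2 by field.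
  rewrite exp_plus. assert (Hlin := exp_ineq1_le (x / 2)). simpl. nra.
Qed.

Lemma model_below_translates a b lam mu sig (m n : nat) : 0 < a -> 0 < b ->
  (m = 0%nat \/ m = 1%nat) -> (n = 0%nat \/ n = 1%nat) ->
  (lam < mu \/ (lam = mu /\ m = 1%nat /\ n = 0%nat)) ->
  exists S, forall s, s <= S ->
    b * (- s) ^ n * exp (mu * s) <= a * (- (s + sig)) ^ m * exp (lam * (s + sig)).
Proof.
  intros Ha Hb Hm Hn Hcase.
  set (L := exp (lam * sig)). assert (HL : 0 < L) by apply exp_pos.
  assert (Hsplit : forall s, exp (lam * (s + sig)) = exp (lam * s) * L).
  { intros s. unfold L. rewrite <- exp_plus. f_equal. ring. }
  destruct Hcase as [Hlt | [<- [-> ->]]].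
  - (* rates differ: [u e^(-(mu - lam) u)] is eventually small, [u = -s] *)
    set (d := mu - lam). assert (Hd : 0 < d) by (unfold d; lra).
    assert (Hd2 : 0 < a * L * d ^ 2) by (apply Rmult_lt_0_compat; [nra | apply pow_lt; lra]).
    assert (Habs := Rle_abs sig).
    assert (Habs0 := Rabs_pos sig).
    exists (Rmin (- 1 - Rabs sig) (- (4 * b / (a * L * d ^ 2)))).
    intros s Hs.
    assert (Hs1 := Rle_trans _ _ _ Hs (Rmin_l _ _)).
    assert (Hs2 := Rle_trans _ _ _ Hs (Rmin_r _ _)).
    set (u := - s).
    assert (Hu : 4 * b <= a * L * d ^ 2 * u).
    { replace (4 * b) with (4 * b / (a * L * d ^ 2) * (a * L * d ^ 2)) by (field; lra).
      rewrite (Rmult_comm (a * L * d ^ 2) u). apply Rmult_le_compat_r; unfold u; lra. }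
    assert (Hsq := exp_ge_half_square (d * u) ltac:(apply Rmult_le_pos; unfold u; lra)).
    assert (Hrates : exp (mu * s) * exp (d * u) = exp (lam * s)).
    { rewrite <- exp_plus. f_equal. unfold d, u. ring. }
    assert (Hpow_n : u ^ n <= u) by (destruct Hn as [-> | ->]; simpl; unfold u; lra).
    assert (Hpow_m : 1 <= (- (s + sig)) ^ m) by (destruct Hm as [-> | ->]; simpl; lra).
    assert (Hpow_n0 : 0 <= u ^ n) by (apply pow_le; unfold u; lra).
    rewrite Hsplit, <- Hrates.
    set (A := exp (mu * s)) in *. assert (HA : 0 < A) by apply exp_pos.
    set (E := exp (d * u)) in *.
    (* [b u <= a L (d u / 2)^2 <= a L E] *)
    assert (Hkey : b * u <= a * L * E).
    { apply Rle_trans with (a * L * (d * u / 2) ^ 2); [|apply Rmult_le_compat_l; nra].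
      replace (a * L * (d * u / 2) ^ 2) with (a * L * d ^ 2 * u * (u / 4)) by (simpl; field).
      replace (b * u) with (4 * b * (u / 4)) by field.
      apply Rmult_le_compat_r; unfold u in *; lra. }
    set (X := (- (s + sig)) ^ m) in *. set (Y := u ^ n) in *.
    assert (b * Y <= b * u) by (apply Rmult_le_compat_l; lra).
    assert (a * L * E <= a * X * L * E).
    { replace (a * X * L * E) with (a * L * E * X) by ring.
      rewrite <- (Rmult_1_r (a * L * E)) at 1. apply Rmult_le_compat_l; [|lra].
      apply Rmult_le_pos; [nra | unfold E; left; apply exp_pos]. }
    replace (a * X * (A * E * L)) with (A * (a * X * L * E)) by ring.
    replace (b * Y * A) with (A * (b * Y)) by ring.
    apply Rmult_le_compat_l; lra.
  - (* equal rates: the extra factor [-(s + sig)] eventually exceeds [b / (a L)] *)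
    exists (- sig - b / (a * L)). intros s Hs. rewrite Hsplit. simpl.
    assert (Hfac : b <= a * L * (- (s + sig))).
    { replace b with (b / (a * L) * (a * L)) by (field; lra).
      rewrite (Rmult_comm (a * L)). apply Rmult_le_compat_r; [nra | lra]. }
    assert (HE := exp_pos (lam * s)).
    replace (a * (- (s + sig) * 1) * (exp (lam * s) * L))
      with (exp (lam * s) * (a * L * (- (s + sig)))) by ring.
    replace (b * 1 * exp (lam * s)) with (exp (lam * s) * b) by ring.
    apply Rmult_le_compat_l; lra.
Qed.

Lemma decays_faster_of_asymptotics phi psi a b lam mu (m n : nat) :
  0 < a -> 0 < b -> (m = 0%nat \/ m = 1%nat) -> (n = 0%nat \/ n = 1%nat) ->
  asympt_minus_infty phi a lam m -> asympt_minus_infty psi b mu n ->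
  (lam < mu \/ (lam = mu /\ m = 1%nat /\ n = 0%nat)) ->
  decays_faster psi phi.
Proof.
  intros Ha Hb Hm Hn Aphi Apsi Hcase sig.
  destruct (asymptotic_bounds phi a lam m Aphi Ha) as [M1 HM1].
  destruct (asymptotic_bounds psi b mu n Apsi Hb) as [M2 HM2].
  destruct (model_below_translates a (3 * b) lam mu sig m n Ha ltac:(lra) Hm Hn Hcase)
    as [S HS].
  exists (Rmin (Rmin (M1 - sig) M2) S). intros s Hs.
  assert (H1 := Rle_trans _ _ _ Hs (Rmin_l _ _)).
  assert (H2 := Rmin_l (M1 - sig) M2). assert (H3 := Rmin_r (M1 - sig) M2).
  assert (H4 := Rle_trans _ _ _ Hs (Rmin_r _ _)).
  destruct (HM1 (s + sig) ltac:(lra)) as [Hphi _].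
  destruct (HM2 s ltac:(lra)) as [_ Hpsi].
  specialize (HS s H4). lra.
Qed.

Lemma expansions_not_ordered h g kappa c phi psi a b lam mu (m n : nat) :
  0 < h -> hypH g kappa -> 0 < c ->
  wavefront g kappa h c phi -> wavefront g kappa h c psi ->
  0 < a -> 0 < b -> (m = 0%nat \/ m = 1%nat) -> (n = 0%nat \/ n = 1%nat) ->
  asympt_minus_infty phi a lam m -> asympt_minus_infty psi b mu n ->
  ~ (lam < mu \/ (lam = mu /\ m = 1%nat /\ n = 0%nat)).
Proof.
  intros Hh HH Hc Wphi Wpsi Ha Hb Hm Hn Aphi Apsi Hcase.
  apply (no_faster_decay g kappa h c phi psi Hh Hc HH Wphi Wpsi).
  exact (decays_faster_of_asymptotics phi psi a b lam mu m n Ha Hb Hm Hn Aphi Apsi Hcase).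
Qed.

Theorem mainTheorem5 (h : R) (g : R -> R) (kappa c : R) (phi psi : R -> R)
    (a b lam mu : R) (m n : nat) :
  0 < h -> hypH g kappa -> 0 < c ->
  wavefront g kappa h c phi -> wavefront g kappa h c psi ->
  0 < a -> 0 < b -> 0 < lam -> 0 < mu ->
  (m = 0%nat \/ m = 1%nat) -> (n = 0%nat \/ n = 1%nat) ->
  asympt_minus_infty phi a lam m -> asympt_minus_infty psi b mu n ->
  lam = mu /\ m = n.
Proof.
  intros Hh HH Hc Wphi Wpsi Ha Hb _ _ Hm Hn Aphi Apsi.
  assert (Hphi_psi := expansions_not_ordered h g kappa c phi psi a b lam mu m n
                        Hh HH Hc Wphi Wpsi Ha Hb Hm Hn Aphi Apsi).
  assert (Hpsi_phi := expansions_not_ordered h g kappa c psi phi b a mu lam n m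
                        Hh HH Hc Wpsi Wphi Hb Ha Hn Hm Apsi Aphi).
  destruct (Rtotal_order lam mu) as [Hlt | [<- | Hgt]].
  - exfalso. apply Hphi_psi. left. exact Hlt.
  - split; [reflexivity|].
    destruct Hm as [-> | ->], Hn as [-> | ->]; try reflexivity; exfalso;
      [apply Hpsi_phi | apply Hphi_psi]; right; auto.
  - exfalso. apply Hpsi_phi. left. exact Hgt.
Qed.
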